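(* Suppose that a graph property $\Pi$ has a canonical size-oblivious $\varepsilon$-tester with sample complexity $s=s(\varepsilon)$. Then for every $n\ge s^4$ and every $n$-vertex graph $G$ which is $\varepsilon$-far from $\Pi$, if $U$ is chosen uniformly at random from the $s^4$-element subsets of $V(G)$, then $\mathbb{P}[G[U]\in\Pi]\le e^{-\Omega(s)}$, where the constant implicit in $\Omega$ is absolute (independent of $\Pi$, $\varepsilon$, $n$ and $G$).
   Context: Dense graph model: graphs are given as adjacency matrices; an $n$-vertex graph is $\varepsilon$-far from $\Pi$ if at least $\varepsilon n^2$ adjacency-matrix entries must be changed to obtain a graph in $\Pi$. An $\varepsilon$-tester for $\Pi$ accepts graphs in $\Pi$ with probability at least $2/3$ and rejects graphs $\varepsilon$-far from $\Pi$ with probability at least $2/3$. A tester is canonical if it samples a uniformly random set of $s$ vertices, queries all pairs among them, and decides based only on the isomorphism class of the induced subgraph on the sample; $s$ is its sample complexity. It is size-oblivious if its operation depends only on $\varepsilon$, not on the number of vertices $n$ (so here $s$ depends only on $\varepsilon$). $G[U]$ denotes the subgraph of $G$ induced on $U$. *)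

From mathcomp Require Import all_boot.
From mathcomp Require Import fingroup perm.
From Stdlib Require Import Reals.

Set Implicit Arguments.
Unset Strict Implicit.
Unset Printing Implicit Defensive.

Record sgraph (n : nat) := SGraph {
  adj : rel 'I_n ;
  adj_sym : symmetric adj ;
  adj_irr : irreflexive adj }.
Arguments adj {n}.

Definition graph_pred := forall k : nat, sgraph k -> bool.

Definition iso n (G H : sgraph n) : Prop :=
  exists s : {perm 'I_n}, forall i j, adj H (s i) (s j) = adj G i j.

Definition graph_property (P : graph_pred) : Prop :=
  forall n (G H : sgraph n), iso G H -> P n G = P n H.

Lemma induced_sym n (G : sgraph n) (U : {set 'I_n}) :
  symmetric (fun i j : 'I_#|U| => adj G (enum_val i) (enum_val j)).
Proof. by move=> i j; rewrite /= (adj_sym G). Qed.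

Lemma induced_irr n (G : sgraph n) (U : {set 'I_n}) :
  irreflexive (fun i j : 'I_#|U| => adj G (enum_val i) (enum_val j)).
Proof. by move=> i; rewrite /= (adj_irr G). Qed.

Definition induced n (G : sgraph n) (U : {set 'I_n}) : sgraph #|U| :=
  @SGraph #|U| _ (@induced_sym n G U) (@induced_irr n G U).

Definition mdist n (G H : sgraph n) : nat :=
  #|[set p : 'I_n * 'I_n | adj G p.1 p.2 != adj H p.1 p.2]|.

Definition far (P : graph_pred) (eps : R) n (G : sgraph n) : Prop :=
  forall H : sgraph n, P n H -> (eps * INR (muln n n) <= INR (mdist G H))%R.

Definition sample_prob (Q : graph_pred) n (k : nat) (G : sgraph n) : R :=
  (INR #|[set U : {set 'I_n} | (#|U| == k) && Q #|U| (induced G U)]|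
   / INR 'C(n, k))%R.

(* D is (the decision rule of) a canonical size-oblivious eps-tester for P with
   sample complexity s: D is evaluated on s-vertex samples, depends only on the
   isomorphism class of the sample, is the same for every n, and for every
   n >= s it accepts graphs in P w.p. >= 2/3 and rejects eps-far graphs w.p. >= 2/3. *)
Definition canonical_tester (P : graph_pred) (eps : R) (s : nat) (D : graph_pred) : Prop :=
  (forall G H : sgraph s, iso G H -> D s G = D s H) /\
  (forall n (G : sgraph n), s <= n ->
     (P n G -> (2 / 3 <= sample_prob D s G)%R) /\
     (far P eps G -> (sample_prob D s G <= 1 / 3)%R)).

(* Let k = s/2 (rounded down) and call an s-set of vertices good when the tester
   accepts the graph it induces.  As G is eps-far, at most a third of all s-sets
   are good, so G contains at most (C(n,s)/3)^k ordered k-tuples of pairwise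
   disjoint good sets, each lying in C(n - ks, s^4 - ks) sets U of size s^4.
   If G[U] is in the property, at least two thirds of the s-subsets of U are
   good; since C(s^4 - ks, s) >= 5/6 C(s^4, s), at least half of them stay good
   after deleting any ks vertices, so U contains at least (C(s^4,s)/2)^k such
   tuples.  Double counting, with 3 C(n,s)^k C(n - ks, s^4 - ks) <= 4 C(s^4,s)^k
   C(n, s^4) (as 4(ks)^2 <= n), bounds the probability by (4/3)(2/3)^k, which
   is at most (10/11)^s for s >= 6. *)

From mathcomp Require Import all_boot.
From mathcomp Require Import fingroup perm.
From Stdlib Require Import Reals.
From mathcomp Require Import zify.
From Stdlib Require Import Lra.
(* Reals rebinds [_ ^ _] in nat_scope to [Nat.pow]; restore ssrnat's [expn]. *)
Import ssrnat.

Set Implicit Arguments.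
Unset Strict Implicit.
Unset Printing Implicit Defensive.

Lemma leq_expn2r e m n : m <= n -> m ^ e <= n ^ e.
Proof. by move=> le_mn; elim: e => // e IHe; rewrite !expnS leq_mul. Qed.

Lemma leq_pexpn n e : 0 < e -> n <= n ^ e.
Proof. by case: n => // n e_gt0; rewrite -{1}[n.+1]expn1 leq_pexp2l. Qed.

Lemma ffact_le_expn n k : n ^_ k <= n ^ k.
Proof.
elim: k => // k IHk; rewrite ffactnSr expnS mulnC.
by apply: leq_mul; [apply: leq_subr | apply: IHk].
Qed.

Lemma expnB_le_ffact n k : (n - k) ^ k <= n ^_ k.
Proof.
have -> : (n - k) ^ k = \prod_(i < k) (n - k) by rewrite prod_nat_const card_ord.
rewrite ffact_prod.
by apply: leq_prod => i _; apply: leq_sub2l; apply: ltnW.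
Qed.

Lemma leq_ffact k m n : m <= n -> m ^_ k <= n ^_ k.
Proof.
move=> le_mn; rewrite !ffact_prod; apply: leq_prod => i _.
exact: leq_sub2r.
Qed.

Lemma ffactnD n a b : n ^_ (a + b) = n ^_ a * (n - a) ^_ b.
Proof.
elim: b => [|b IHb]; first by rewrite addn0 ffactn0 muln1.
by rewrite addnS !ffactnSr IHb -mulnA subnDA.
Qed.

Lemma ffact_mul_le n k s : n ^_ (k * s) <= (n ^_ s) ^ k.
Proof.
elim: k n => [|k IHk] n; first by rewrite mul0n ffactn0 expn0.
rewrite mulSn ffactnD expnS leq_mul //.
by apply: leq_trans (IHk _) _; apply/leq_expn2r/leq_ffact/leq_subr.
Qed.

Lemma bernoulli_expn n j k : n ^ k * (n - k * j) <= n * (n - j) ^ k.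
Proof.
elim: k => [|k IHk]; first by rewrite !expn0 mul0n subn0 mul1n muln1.
have step : n * (n - k.+1 * j) <= (n - k * j) * (n - j) by nia.
have := leq_mul (leqnn (n - j)) IHk.
rewrite !expnS; move: (n ^ k) ((n - j) ^ k) => x y.
nia.
Qed.

Lemma expnB_ratio n j : 4 * (j * j) <= n -> 3 * n ^ j <= 4 * (n - j) ^ j.
Proof.
move=> jn; have [n0|n_gt0] := posnP n.
  by rewrite n0 in jn *; have -> : j = 0 by lia.
have := bernoulli_expn n j j; move: (n ^ j) ((n - j) ^ j) => x y bern.
rewrite -(leq_pmul2l n_gt0); nia.
Qed.

Lemma ffact_block_ratio n m k s : 4 * ((k * s) * (k * s)) <= n ->
  3 * ((n ^_ s) ^ k * m ^_ (k * s)) <= 4 * ((m ^_ s) ^ k * n ^_ (k * s)).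
Proof.
move=> jn; set j := k * s.
have nj : (n ^_ s) ^ k <= n ^ j by rewrite /j mulnC expnM leq_expn2r ?ffact_le_expn.
have mj : m ^_ j <= (m ^_ s) ^ k by apply: ffact_mul_le.
have := leq_trans (expnB_ratio jn) (leq_mul (leqnn 4) (expnB_le_ffact n j)).
move: nj mj; move: ((n ^_ s) ^ k) (m ^_ j) ((m ^_ s) ^ k) (n ^ j) (n ^_ j) => a b c d e.
nia.
Qed.

Lemma mul_bin_sub n m j : j <= m ->
  'C(n, m) * 'C(m, j) = 'C(n, j) * 'C(n - j, m - j).
Proof.
move=> le_jm; apply/eqP.
have f_gt0 : 0 < j`! * (m - j)`! by rewrite muln_gt0 !fact_gt0.
rewrite -(eqn_pmul2r f_gt0) [X in _ == X]mulnACA !bin_ffact -ffactnD subnKC //.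
by rewrite -mulnA (mulnA 'C(m, j)) bin_ffact ffact_fact // bin_ffact.
Qed.

Lemma bin_block_ratio n m k s : k * s <= m -> 4 * ((k * s) * (k * s)) <= n ->
  3 * 'C(n, s) ^ k * 'C(n - k * s, m - k * s) <= 4 * 'C(m, s) ^ k * 'C(n, m).
Proof.
set j := k * s => le_jm jn.
have bin_ratio : 3 * ('C(n, s) ^ k * 'C(m, j)) <= 4 * ('C(m, s) ^ k * 'C(n, j)).
  have f_gt0 : 0 < s`! ^ k * j`! by rewrite muln_gt0 expn_gt0 !fact_gt0.
  rewrite -(leq_pmul2r f_gt0) -(mulnA 3) -(mulnA 4) mulnACA [X in _ <= 4 * X]mulnACA.
  rewrite -!expnMn !bin_ffact.
  exact: ffact_block_ratio.
have C_gt0 : 0 < 'C(n, j) by rewrite bin_gt0; nia.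
rewrite -(leq_pmul2r C_gt0) -!mulnA (mulnC _ 'C(n, j)) -mul_bin_sub //.
by rewrite !(mulnCA _ 'C(n, m)) leq_mul2l bin_ratio orbT.
Qed.

Lemma bin_s4_ratio s w : 6 <= s -> s ^ 4 + s <= w + s * s ->
  5 * 'C(s ^ 4, s) <= 6 * 'C(w, s).
Proof.
move=> s_ge6 hw; set m := s ^ 4.
have pow_ratio : 5 * m ^ s <= 6 * (m - s * s) ^ s.
  have := bernoulli_expn m (s * s) s; move: (m ^ s) ((m - s * s) ^ s) => x y.
  have em : m = (s * s * s) * s by rewrite /m !expnS expn0 muln1 !mulnA.
  have -> : m - s * (s * s) = (s * s * s) * (s - 1) by rewrite em; nia.
  have t_gt0 : 0 < s * s * s by nia.
  rewrite em (mulnCA x) -(mulnA _ s y) leq_pmul2l // => bern.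
  have s_gt0 : 0 < s by lia.
  rewrite -(leq_pmul2l s_gt0); nia.
rewrite -(leq_pmul2r (fact_gt0 s)) -!mulnA !bin_ffact.
apply: leq_trans (leq_mul (leqnn 5) (ffact_le_expn m s)) _.
apply: (leq_trans pow_ratio); rewrite leq_mul2l; apply/orP; right.
apply: leq_trans (expnB_le_ffact w s); apply: leq_expn2r; lia.
Qed.

Lemma pow_ratio_10_11 k s : 2 <= k -> s <= k.*2.+1 ->
  4 * 2 ^ k * 11 ^ s <= 3 ^ k.+1 * 10 ^ s.
Proof.
move=> k_ge2 hs.
have top : 4 * 2 ^ k * 11 ^ k.*2.+1 <= 3 ^ k.+1 * 10 ^ k.*2.+1.
  elim: k k_ge2 {hs} => [//|k IHk].
  rewrite leq_eqVlt ltnS => /orP [/eqP <- | k_ge2]; first by rewrite !expnS expn0; lia.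
  have := IHk k_ge2; rewrite doubleS !expnS; nia.
have e : k.*2.+1 = s + (k.*2.+1 - s) by rewrite subnKC.
move: top; rewrite e !expnD; set d := k.*2.+1 - s => top.
rewrite -(leq_pmul2r (expn_gt0 10 d)) -!mulnA.
apply: leq_trans top; rewrite !mulnA leq_mul2l leq_expn2r ?orbT //.
Qed.

Lemma decay_10_11 k s b c : 2 <= k -> s <= k.*2.+1 ->
  3 ^ k.+1 * b <= 4 * 2 ^ k * c -> b * 11 ^ s <= 10 ^ s * c.
Proof.
move=> k_ge2 s_le bc; have ratio := pow_ratio_10_11 k_ge2 s_le.
rewrite -(leq_pmul2l (expn_gt0 3 k.+1)).
have := leq_mul bc (leqnn (11 ^ s)); have := leq_mul ratio (leqnn c).
move: (3 ^ _) (2 ^ _) (11 ^ _) (10 ^ _) => t w e d; lia.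
Qed.

Lemma sum_supsets_setD (V : finType) (F : {set V} -> nat) (S W : {set V}) m :
    S \subset W -> #|S| <= m ->
  \sum_(U : {set V} | [&& U \subset W, #|U| == m & S \subset U]) F (U :\: S)
  = \sum_(U : {set V} | (U \subset W :\: S) && (#|U| == m - #|S|)) F U.
Proof.
move=> sSW hm.
rewrite (reindex_onto (fun U : {set V} => U :|: S) (fun U => U :\: S)); last first.
  by move=> U /and3P [_ _ sSU]; rewrite setUC -{1}(setIidPr sSU) setID.
apply: eq_big => U; last by move=> /andP [_ /eqP ->].
rewrite setDUl setDv setU0 subsetUr !andbT.
have [dj|ndj] := boolP [disjoint U & S].
  rewrite (setDidPl dj) eqxx andbT subsetD dj andbT subUset sSW andbT.
  rewrite cardsU (disjoint_setI0 dj) cards0 subn0.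
  by case: (U \subset W) => //=; apply/idP/idP => /eqP h; apply/eqP; lia.
rewrite subsetD (negbTE ndj) andbF; apply/negbTE/negP => /andP [_ /eqP].
by move/setDidPl; rewrite (negbTE ndj).
Qed.

Section DisjointPackings.
Variables (V : finType) (s : nat) (a : pred {set V}).

Definition good_in (W S : {set V}) := [&& S \subset W, #|S| == s & a S].

Definition ngood (W : {set V}) := #|[set S | good_in W S]|.

Fixpoint npack (W : {set V}) (k : nat) : nat :=
  if k is k'.+1 then \sum_(S | good_in W S) npack (W :\: S) k' else 1.

Lemma npack_le (W : {set V}) k : npack W k <= ngood setT ^ k.
Proof.
elim: k W => [|k IHk] W /=; first by rewrite expn0.
apply: leq_trans (_ : _ <= \sum_(S | good_in W S) ngood setT ^ k) _.
  by apply: leq_sum => S _; apply: IHk.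
rewrite sum_nat_cond_const expnS leq_mul2r subset_leq_card ?orbT //.
by apply/subsetP => S; rewrite !inE /good_in subsetT => /and3P [_ -> ->].
Qed.

Lemma ngood_subset (U W : {set V}) : W \subset U ->
  ngood U <= ngood W + ('C(#|U|, s) - 'C(#|W|, s)).
Proof.
move=> sWU; set draws := fun X : {set V} => [set S : {set V} | S \subset X & #|S| == s].
have sdraws : draws W \subset draws U.
  by apply/subsetP => S; rewrite !inE => /andP [/subset_trans-> //].
have : [set S | good_in U S] \subset [set S | good_in W S] :|: (draws U :\: draws W).
  apply/subsetP => S; rewrite !inE /good_in => /and3P [-> -> ->].
  by rewrite !andbT; case: (S \subset W).
move/subset_leq_card/leq_trans; apply; apply: leq_trans (leq_card_setU _ _) _.
by rewrite leq_add2l cardsD (setIidPr sdraws) !cards_draws.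
Qed.

Lemma expn_le_npack c B k (W : {set V}) :
    (forall W' : {set V}, W' \subset W -> #|W| <= #|W'| + k * s -> B <= c * ngood W') ->
  B ^ k <= c ^ k * npack W k.
Proof.
elim: k W => [|k IHk] W dense /=; first by rewrite !expn0.
have B_le : B <= c * ngood W by apply: dense; rewrite ?leq_addr.
have : \sum_(S | good_in W S) B ^ k <= \sum_(S | good_in W S) c ^ k * npack (W :\: S) k.
  apply: leq_sum => S /and3P [sSW /eqP cS _]; apply: IHk => W' sW' cW'.
  apply: dense; first exact: subset_trans sW' (subsetDl _ _).
  move: cW'; rewrite cardsD (setIidPr sSW) cS mulSn; lia.
rewrite sum_nat_cond_const -big_distrr /= -/(ngood W) => sum_le.
rewrite expnS (expnS c) -mulnA; apply: leq_trans (leq_mul B_le (leqnn _)) _.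
by rewrite -mulnA leq_mul2l sum_le orbT.
Qed.

Lemma sum_npack_subsets k (W : {set V}) m : k * s <= m ->
  \sum_(U : {set V} | (U \subset W) && (#|U| == m)) npack U k
  = npack W k * 'C(#|W| - k * s, m - k * s).
Proof.
elim: k W m => [|k IHk] W m hm /=.
  by rewrite mul0n !subn0 mul1n sum1_card -cards_draws; apply: eq_card => U; rewrite inE.
rewrite (exchange_big_dep (good_in W)) /=; last first.
  by move=> U S /andP [sUW _] /and3P [sSU cS aS]; apply/and3P; split => //; apply: subset_trans sUW.
rewrite big_distrl /=; apply: eq_bigr => S /and3P [sSW /eqP cS aS].
rewrite (eq_bigl (fun U : {set V} => [&& U \subset W, #|U| == m & S \subset U])); last first.
  by move=> U; rewrite /good_in cS eqxx aS !andbT andbA.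
have [hsm hkm] : s <= m /\ k * s <= m - s by move: hm; rewrite mulSn; lia.
rewrite (sum_supsets_setD (fun X => npack X k)) ?cS // IHk //.
by rewrite cardsD (setIidPr sSW) cS mulSn !subnDA.
Qed.

Definition dense (U : {set V}) := (#|U| == s ^ 4) && (2 * 'C(s ^ 4, s) <= 3 * ngood U).

Lemma dense_npack_ge (U : {set V}) : 6 <= s -> dense U ->
  'C(s ^ 4, s) ^ s./2 <= 2 ^ s./2 * npack U s./2.
Proof.
move=> s_ge6 /andP [/eqP cU dU]; apply: expn_le_npack => W sWU cW.
have := ngood_subset sWU; rewrite cU.
have : 5 * 'C(s ^ 4, s) <= 6 * 'C(#|W|, s).
  by apply: bin_s4_ratio => //; move: cW; rewrite cU; nia.
lia.
Qed.

Lemma card_dense_le : 6 <= s -> s ^ 4 <= #|V| -> 3 * ngood setT <= 'C(#|V|, s) ->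
  3 ^ s./2.+1 * #|[set U | dense U]| <= 4 * 2 ^ s./2 * 'C(#|V|, s ^ 4).
Proof.
move=> s_ge6 s4_le sparse; set k := s./2; set m := s ^ 4; set n := #|V|.
have em : m = (s * s) * (s * s) by rewrite /m !expnS expn0 muln1 !mulnA.
have two_ks : 2 * (k * s) <= s * s by rewrite mulnA leq_mul2r /k; lia.
have km : k * s <= m by rewrite em; nia.
have kn : 4 * ((k * s) * (k * s)) <= n by apply: leq_trans s4_le; rewrite -/m em; nia.
have count_pairs : #|[set U | dense U]| * 'C(m, s) ^ k
    <= 2 ^ k * (ngood setT ^ k * 'C(n - k * s, m - k * s)).
  rewrite -sum_nat_const.
  apply: leq_trans (_ : \sum_(U in [set U | dense U]) 2 ^ k * npack U k <= _).
    by apply: leq_sum => U; rewrite inE; apply: dense_npack_ge.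
  rewrite -big_distrr leq_mul2l /=; apply/orP; right.
  apply: leq_trans (_ : \sum_(U : {set V} | (U \subset setT) && (#|U| == m)) npack U k <= _).
    rewrite big_mkcond [X in _ <= X]big_mkcond /=; apply: leq_sum => U _.
    rewrite inE subsetT /=; case dU: (dense U) => //.
    by case/andP: dU => ->.
  by rewrite sum_npack_subsets // cardsT leq_mul2r npack_le orbT.
have sparse_k : 3 ^ k * ngood setT ^ k <= 'C(n, s) ^ k by rewrite -expnMn leq_expn2r.
have := bin_block_ratio km kn.
have Cm_gt0 : 0 < 'C(m, s) ^ k by rewrite expn_gt0 bin_gt0; nia.
move: count_pairs sparse_k Cm_gt0; rewrite expnS.
move: #|_| ('C(m, s) ^ k) (ngood setT ^ k) ('C(n - k * s, m - k * s)) (3 ^ k) (2 ^ k).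
move: ('C(n, s) ^ k) ('C(n, m)) => b y d c g x t w dc tg c_gt0 bx.
rewrite -(leq_pmul2r c_gt0).
have := leq_mul (leqnn (3 * t)) dc; have := leq_mul (leqnn (3 * w * x)) tg.
have := leq_mul (leqnn w) bx; nia.
Qed.

End DisjointPackings.

Section RealBounds.
Local Open Scope R_scope.

Lemma INR_expn a b : INR (a ^ b)%N = INR a ^ b.
Proof. by elim: b => [|b IHb] //; rewrite expnS mult_INR IHb. Qed.

Lemma INR_frac_le a b c d : (0 < b)%N -> (0 < d)%N ->
  INR a / INR b <= INR c / INR d <-> (a * d <= c * b)%N.
Proof.
move=> /ltP/lt_0_INR b_gt0 /ltP/lt_0_INR d_gt0.
have bd_gt0 : 0 < INR b * INR d by apply: Rmult_lt_0_compat.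
have ad : INR a / INR b * (INR b * INR d) = INR a * INR d by field; lra.
have cb : INR c / INR d * (INR b * INR d) = INR c * INR b by field; lra.
split => [h | /leP/le_INR].
  by apply/leP/INR_le; rewrite !mult_INR -ad -cb; apply: Rmult_le_compat_r; lra.
by rewrite !mult_INR -ad -cb; apply: Rmult_le_reg_r.
Qed.

Lemma exp_neg_ln_frac p q s : (0 < p)%N -> (0 < q)%N ->
  exp (- (ln (INR p / INR q) * INR s)) = INR (q ^ s) / INR (p ^ s).
Proof.
move=> /ltP/lt_0_INR p_gt0 /ltP/lt_0_INR q_gt0.
have pq_gt0 : 0 < INR p / INR q by apply: Rdiv_lt_0_compat.
rewrite Rmult_comm -ln_pow // exp_Ropp exp_ln; last exact: pow_lt.
rewrite !INR_expn /Rdiv Rpow_mult_distr pow_inv.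
field; split; apply: pow_nonzero; lra.
Qed.

End RealBounds.

Definition accepts (D : graph_pred) n (G : sgraph n) (S : {set 'I_n}) := D #|S| (induced G S).

Lemma iso_invariant_inj s (D : graph_pred) (D_iso : forall G H : sgraph s, iso G H -> D s G = D s H)
    a b (G : sgraph a) (H : sgraph b) (f : 'I_a -> 'I_b) :
  a = s -> b = s -> injective f -> (forall i j, adj H (f i) (f j) = adj G i j) ->
  D a G = D b H.
Proof.
move=> ea eb; subst a b => f_inj f_adj; apply: D_iso.
by exists (perm f_inj) => i j; rewrite !permE.
Qed.

Lemma card_accepted_induced_le s (D : graph_pred)
    (D_iso : forall G H : sgraph s, iso G H -> D s G = D s H) n (G : sgraph n) (U : {set 'I_n}) :
  #|[set T : {set 'I_#|U|} | (#|T| == s) && D #|T| (induced (induced G U) T)]|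
  <= ngood s (accepts D G) U.
Proof.
rewrite -(card_imset _ (imset_inj (@enum_val_inj _ (mem U)))).
apply/subset_leq_card/subsetP => X /imsetP [T /[!inE] /andP [/eqP cT DT] ->].
set S := [set enum_val x | x in T].
have cS : #|S| = s by rewrite card_imset //; apply: enum_val_inj.
rewrite /good_in /accepts [#|S| == s](introT eqP cS) /=; apply/andP; split.
  by apply/subsetP => y /imsetP [x _ ->]; apply: enum_valP.
suff <- : D #|T| (induced (induced G U) T) = D #|S| (induced G S) by [].
pose g (i : 'I_#|T|) : 'I_n := enum_val (enum_val i).
have gS i : g i \in S by apply: imset_f; apply: enum_valP.
pose f i := enum_rank_in (gS i) (g i).
have fK i : enum_val (f i) = g i by apply: (enum_rankK_in (gS i) (gS i)).
apply: (iso_invariant_inj D_iso (f := f)) => // [i j|i j].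
  by move/(congr1 enum_val); rewrite !fK => /enum_val_inj /enum_val_inj.
by rewrite /= !fK.
Qed.

Lemma far_ngood_le P eps s D (tester : canonical_tester P eps s D) n (G : sgraph n) :
  s <= n -> far P eps G -> 3 * ngood s (accepts D G) setT <= 'C(#|'I_n|, s).
Proof.
move=> s_le_n G_far; have := (tester.2 n G s_le_n).2 G_far.
rewrite card_ord /sample_prob (_ : 1 / 3 = INR 1 / INR 3)%R; last by rewrite /=; field.
rewrite INR_frac_le ?bin_gt0 // mul1n mulnC; apply: leq_trans.
by rewrite leq_mul2l subset_leq_card ?orbT //; apply/subsetP => S; rewrite !inE /good_in subsetT.
Qed.

Lemma induced_dense P eps s D (tester : canonical_tester P eps s D) n (G : sgraph n)
    (U : {set 'I_n}) :
  #|U| = s ^ 4 -> P #|U| (induced G U) -> dense s (accepts D G) U.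
Proof.
move=> cU PU; rewrite /dense cU eqxx /=.
have s_le_U : s <= #|U| by rewrite cU leq_pexpn.
have := (tester.2 _ (induced G U) s_le_U).1 PU.
rewrite /sample_prob (_ : 2 / 3 = INR 2 / INR 3)%R; last by rewrite /=; field.
rewrite INR_frac_le ?bin_gt0 // -cU [_ * 3]mulnC => /leq_trans; apply.
by rewrite leq_mul2l card_accepted_induced_le ?orbT //; apply: tester.1.
Qed.


Theorem lemma3p1 :
  exists c : R, (0 < c)%R /\ exists s0 : nat,
  forall (P : graph_pred), graph_property P ->
  forall (eps : R), (0 < eps)%R ->
  forall (s : nat), s0 <= s ->
  forall (D : graph_pred), canonical_tester P eps s D ->
  forall (n : nat), expn s 4 <= n ->
  forall (G : sgraph n), far P eps G ->
  (sample_prob P (expn s 4) G <= exp (- (c * INR s)))%R.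
Proof.
exists (ln (INR 11 / INR 10)); split.
  by rewrite -ln_1; apply: ln_increasing; [lra | rewrite !INR_IZR_INZ /=; lra].
exists 6 => P _ eps _ s s_ge6 D tester n s4_le G G_far.
have s4_le_card : s ^ 4 <= #|'I_n| by rewrite card_ord.
have s_le_n : s <= n := leq_trans (leq_pexpn s (isT : 0 < 4)) s4_le.
have sparse := far_ngood_le tester s_le_n G_far.
have bad_dense : [set U : {set 'I_n} | (#|U| == s ^ 4) && P #|U| (induced G U)]
    \subset [set U | dense s (accepts D G) U].
  by apply/subsetP => U; rewrite !inE => /andP [/eqP cU PU]; apply: (induced_dense tester).
have := leq_trans (leq_mul (leqnn _) (subset_leq_card bad_dense))
  (card_dense_le s_ge6 s4_le_card sparse).
rewrite card_ord /sample_prob exp_neg_ln_frac // INR_frac_le ?expn_gt0 ?bin_gt0 //.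
by move/decay_10_11; apply; lia.
Qed.
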